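(* In the Call-by-Value probabilistic $\lambda$-calculus (as defined in the context), for every multi-distribution $\mathbf m$, the set $\mathrm{Lim}_{\mathrm{obs}_{\mathrm{Nnf}}}(\mathbf m,\Rrightarrow_E)$ contains exactly one element.
   Context: Terms $\Lambda_\oplus$: $M::=x\mid\lambda x.M\mid MM\mid M\oplus M$; values $V::=x\mid\lambda x.M$. Contexts $C::=[\,]\mid MC\mid CM\mid\lambda x.C\mid C\oplus M\mid M\oplus C$; weak contexts $W::=[\,]\mid WM\mid MW$. A multi-distribution is a finite multiset $[p_iM_i]_{i\in I}$ with $p_i\in(0,1]$, $\sum_ip_i\le1$; $+$ is multiset union, $q\cdot[p_iM_i]_i=[(qp_i)M_i]_i$, $[M]:=[1M]$. $C[(\lambda x.M)V]\to_{\beta_v}[C[M\{V/x\}]]$; $W[M\oplus N]\to_\oplus[\tfrac12W[M],\tfrac12W[N]]$; $\to:=\to_{\beta_v}\cup\to_\oplus$; surface reduction $\to_s$ is $\to_\oplus$ together with the closure of $\beta_v$ under weak contexts. $M$ is $\to$-normal (surface-normal) if no $\mathbf m$ with $M\to\mathbf m$ ($M\to_s\mathbf m$); $\mathrm{Nnf}$ is the set of $\to$-normal terms. Let $\rightsquigarrow_U$ be the unbiased iteration of weak $\beta_v$-reduction on $\Lambda_\oplus$: if $M\to_wM'$ (closure of $\beta_v$ under weak contexts) then $M\rightsquigarrow_UM'$; if $M$ is $\to_w$-normal: $\lambda x.P\rightsquigarrow_U\lambda x.P'$, $PQ\rightsquigarrow_UP'Q$, $PQ\rightsquigarrow_UPQ'$,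 $P\oplus Q\rightsquigarrow_UP'\oplus Q$, $P\oplus Q\rightsquigarrow_UP\oplus Q'$ whenever $P\rightsquigarrow_UP'$, resp. $Q\rightsquigarrow_UQ'$. $\rightsquigarrow_E$: if $M$ is not surface-normal and $M\to_s\mathbf m$ then $M\rightsquigarrow_E\mathbf m$; if $M$ is surface-normal and $M\rightsquigarrow_UM'$ then $M\rightsquigarrow_E[M']$. Full lifting $\Rrightarrow_E$: least relation with $[M]\Rrightarrow_E[M]$ if $M$ is $\to$-normal; $[M]\Rrightarrow_E\mathbf m$ if $M\rightsquigarrow_E\mathbf m$; $[p_iM_i]_{i\in I}\Rrightarrow_E\sum_ip_i\cdot\mathbf m_i$ if $[M_i]\Rrightarrow_E\mathbf m_i$ for all $i$. $\mathrm{obs}_{\mathrm{Nnf}}([p_iM_i]_{i\in I})$ is the subdistribution $\mu$ on $\mathrm{Nnf}$ with $\mu(N)=\sum_{i:\,M_i=N}p_i$, ordered pointwise. $\mathrm{Lim}_{\mathrm{obs}_{\mathrm{Nnf}}}(\mathbf m,R)$ is the set of all $\sup_n\mathrm{obs}_{\mathrm{Nnf}}(\mathbf m_n)$ over maximal $R$-sequences $(\mathbf m_n)_n$ from $\mathbf m$ (infinite, or finite ending in an $R$-normal element and then continued constantly). *)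

From Stdlib Require Import Reals Lra Arith List ClassicalDescription.
Import ListNotations.
Open Scope R_scope.

(* Terms of Lambda_oplus, in de Bruijn notation (terms up to alpha-equivalence). *)
Inductive term : Type :=
| Var : nat -> term
| Lam : term -> term
| App : term -> term -> term
| Choice : term -> term -> term.

Definition term_eq_dec (M N : term) : {M = N} + {M <> N}.
Proof. decide equality; apply Nat.eq_dec. Defined.

Definition is_value (V : term) : Prop :=
  match V with Var _ | Lam _ => True | _ => False end.

Fixpoint lift (c : nat) (t : term) : term :=
  match t with
  | Var n => if Nat.ltb n c then Var n else Var (S n)
  | Lam b => Lam (lift (S c) b)
  | App a b => App (lift c a) (lift c b)
  | Choice a b => Choice (lift c a) (lift c b)
  end.

(* subst k v t : substitute v for index k in t (removing binder k). *)
Fixpoint subst (k : nat) (v : term) (t : term) : term :=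
  match t with
  | Var n => if Nat.eqb n k then v
             else if Nat.ltb k n then Var (Nat.pred n) else Var n
  | Lam b => Lam (subst (S k) (lift 0 v) b)
  | App a b => App (subst k v a) (subst k v b)
  | Choice a b => Choice (subst k v a) (subst k v b)
  end.

(* Multi-distributions: finite multisets [p_i M_i], represented as lists. *)
Definition mdist := list (R * term).

Definition valid_mdist (m : mdist) : Prop :=
  (forall pM, In pM m -> 0 < fst pM <= 1) /\
  fold_right (fun pM acc => fst pM + acc) 0 m <= 1.

Definition unit_md (M : term) : mdist := [(1, M)].

Definition scale (q : R) (m : mdist) : mdist :=
  map (fun pM => (q * fst pM, snd pM)) m.

Inductive beta_full : term -> term -> Prop :=
| bf_redex M V : is_value V -> beta_full (App (Lam M) V) (subst 0 V M)
| bf_appl M M' N : beta_full M M' -> beta_full (App M N) (App M' N)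
| bf_appr M N N' : beta_full N N' -> beta_full (App M N) (App M N')
| bf_lam M M' : beta_full M M' -> beta_full (Lam M) (Lam M')
| bf_chl M M' N : beta_full M M' -> beta_full (Choice M N) (Choice M' N)
| bf_chr M N N' : beta_full N N' -> beta_full (Choice M N) (Choice M N').

Inductive beta_weak : term -> term -> Prop :=
| bw_redex M V : is_value V -> beta_weak (App (Lam M) V) (subst 0 V M)
| bw_appl M M' N : beta_weak M M' -> beta_weak (App M N) (App M' N)
| bw_appr M N N' : beta_weak N N' -> beta_weak (App M N) (App M N').

(* oplus_step T L R : T = W[M (+) N], L = W[M], R = W[N] *)
Inductive oplus_step : term -> term -> term -> Prop :=
| os_redex M N : oplus_step (Choice M N) M N
| os_appl T L R N : oplus_step T L R -> oplus_step (App T N) (App L N) (App R N)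
| os_appr M T L R : oplus_step T L R -> oplus_step (App M T) (App M L) (App M R).

Definition oplus_md (L R : term) : mdist := [(1/2, L); (1/2, R)].

Inductive step : term -> mdist -> Prop :=
| st_beta M M' : beta_full M M' -> step M (unit_md M')
| st_oplus M L R : oplus_step M L R -> step M (oplus_md L R).

Inductive sstep : term -> mdist -> Prop :=
| ss_beta M M' : beta_weak M M' -> sstep M (unit_md M')
| ss_oplus M L R : oplus_step M L R -> sstep M (oplus_md L R).

Definition normal (M : term) : Prop := ~ exists m, step M m.
Definition surface_normal (M : term) : Prop := ~ exists m, sstep M m.
Definition weak_normal (M : term) : Prop := ~ exists M', beta_weak M M'.

Inductive stepU : term -> term -> Prop :=
| su_weak M M' : beta_weak M M' -> stepU M M'
| su_lam P P' : weak_normal (Lam P) -> stepU P P' -> stepU (Lam P) (Lam P')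
| su_appl P P' Q : weak_normal (App P Q) -> stepU P P' -> stepU (App P Q) (App P' Q)
| su_appr P Q Q' : weak_normal (App P Q) -> stepU Q Q' -> stepU (App P Q) (App P Q')
| su_chl P P' Q : weak_normal (Choice P Q) -> stepU P P' -> stepU (Choice P Q) (Choice P' Q)
| su_chr P Q Q' : weak_normal (Choice P Q) -> stepU Q Q' -> stepU (Choice P Q) (Choice P Q').

Inductive stepE : term -> mdist -> Prop :=
| se_surf M m : ~ surface_normal M -> sstep M m -> stepE M m
| se_U M M' : surface_normal M -> stepU M M' -> stepE M (unit_md M').

Inductive fullE : mdist -> mdist -> Prop :=
| fe_normal M : normal M -> fullE (unit_md M) (unit_md M)
| fe_step M m : stepE M m -> fullE (unit_md M) m
| fe_lift (l : mdist) (ms : list mdist) :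
    length ms = length l ->
    (forall i, (i < length l)%nat ->
       fullE (unit_md (snd (nth i l (0, Var 0)))) (nth i ms [])) ->
    fullE l (concat (map (fun pm => scale (fst (fst pm)) (snd pm)) (combine l ms))).

Definition obs (m : mdist) (N : term) : R :=
  if excluded_middle_informative (normal N) then
    fold_right (fun pM acc => (if term_eq_dec (snd pM) N then fst pM else 0) + acc) 0 m
  else 0.

Definition rel_normal (Rel : mdist -> mdist -> Prop) (m : mdist) : Prop :=
  ~ exists m', Rel m m'.

(* maximal Rel-sequence from m: infinite, or reaching a Rel-normal element
   and then continued constantly *)
Definition maximal_seq (Rel : mdist -> mdist -> Prop) (m : mdist) (s : nat -> mdist) : Prop :=
  s O = m /\
  forall n, Rel (s n) (s (S n)) \/ (rel_normal Rel (s n) /\ s (S n) = s n).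

Definition is_sup_fun (f : nat -> term -> R) (mu : term -> R) : Prop :=
  (forall n N, f n N <= mu N) /\
  (forall nu : term -> R, (forall n N, f n N <= nu N) -> forall N, mu N <= nu N).

Definition Lim_obs (m : mdist) (Rel : mdist -> mdist -> Prop) (mu : term -> R) : Prop :=
  exists s, maximal_seq Rel m s /\ is_sup_fun (fun n => obs (s n)) mu.

(* Two different surface steps, or two different ~>U steps, from the same term
   can be joined by one more step on each side (a diamond), up to reordering of
   the resulting multi-distributions; all terms they produce are non-normal.
   Lifted to multi-distributions, =>E therefore has a diamond property whose
   two sides have the same observation on normal forms.  Newman's random
   descent argument then shows that all maximal =>E-sequences from m have the
   same observation at every step n, hence the same supremum.  A supremum
   exists by completeness of R, observations being bounded by the total weight. *)

From Stdlib Require Import Reals List.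
From Stdlib Require Import Lra Lia Permutation.
From Stdlib Require Import Classical ClassicalDescription FunctionalExtensionality.
From Stdlib Require ClassicalEpsilon.
Import ListNotations.
Open Scope R_scope.

Lemma value_beta_weak V M : is_value V -> ~ beta_weak V M.
Proof. destruct V; simpl; try tauto; intros _ H; inversion H. Qed.

Lemma value_oplus_step V P Q : is_value V -> ~ oplus_step V P Q.
Proof. destruct V; simpl; try tauto; intros _ H; inversion H. Qed.

Ltac absurd_step :=
  exfalso; match goal with
  | H : beta_weak (Lam _) _ |- _ => inversion H
  | H : beta_weak (Var _) _ |- _ => inversion H
  | H : beta_weak (Choice _ _) _ |- _ => inversion H
  | H : oplus_step (Lam _) _ _ |- _ => inversion H
  | H : oplus_step (Var _) _ _ |- _ => inversion H
  | H : is_value ?V, H' : beta_weak ?V _ |- _ => exact (value_beta_weak _ _ H H')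
  | H : is_value ?V, H' : oplus_step ?V _ _ |- _ => exact (value_oplus_step _ _ _ H H')
  end.

Lemma beta_weak_diamond M M1 M2 : beta_weak M M1 -> beta_weak M M2 ->
  M1 = M2 \/ exists M3, beta_weak M1 M3 /\ beta_weak M2 M3.
Proof.
  intros H1; revert M2; induction H1; intros M2 H2; inversion H2; subst;
    try (left; reflexivity); try absurd_step.
  - destruct (IHbeta_weak _ H4) as [->|[M3 [A B]]]; [left; reflexivity|].
    right; exists (App M3 N); split; constructor; auto.
  - right; exists (App M' N'); split; constructor; auto.
  - right; exists (App M' N'); split; constructor; auto.
  - destruct (IHbeta_weak _ H4) as [->|[M3 [A B]]]; [left; reflexivity|].
    right; exists (App M M3); split; constructor; auto.
Qed.

Lemma beta_weak_oplus_step M M' P Q : beta_weak M M' -> oplus_step M P Q ->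
  exists P' Q', beta_weak P P' /\ beta_weak Q Q' /\ oplus_step M' P' Q'.
Proof.
  intros Hb Ho; revert M' Hb.
  induction Ho as [A B|T P Q N Ho IH|N T P Q Ho IH]; intros M' Hb; inversion Hb; subst;
    try absurd_step.
  - destruct (IH _ H2) as [P' [Q' [HP [HQ HO]]]].
    exists (App P' N), (App Q' N); repeat split; constructor; auto.
  - do 2 eexists; repeat split; constructor; eassumption.
  - do 2 eexists; repeat split; constructor; eassumption.
  - destruct (IH _ H2) as [P' [Q' [HP [HQ HO]]]].
    exists (App N P'), (App N Q'); repeat split; constructor; auto.
Qed.

Lemma oplus_step_diamond M P Q P' Q' : oplus_step M P Q -> oplus_step M P' Q' ->
  (P = P' /\ Q = Q') \/ exists A B C D, oplus_step P A B /\ oplus_step Q C D /\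
     oplus_step P' A C /\ oplus_step Q' B D.
Proof.
  intros H1; revert P' Q'.
  induction H1 as [A B|T P Q N H1 IH|N T P Q H1 IH]; intros P' Q' H2; inversion H2; subst;
    try absurd_step.
  - left; auto.
  - destruct (IH _ _ H5) as [[-> ->]|[A [B [C [D [h1 [h2 [h3 h4]]]]]]]]; [left; auto|].
    right; exists (App A N), (App B N), (App C N), (App D N); repeat split; constructor; auto.
  - right; do 4 eexists; repeat split; constructor; eassumption.
  - right; do 4 eexists; repeat split; constructor; eassumption.
  - destruct (IH _ _ H5) as [[-> ->]|[A [B [C [D [h1 [h2 [h3 h4]]]]]]]]; [left; auto|].
    right; exists (App N A), (App N B), (App N C), (App N D); repeat split; constructor; auto.
Qed.

Lemma weak_normal_Lam P : weak_normal (Lam P).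
Proof. intros [M' H]; inversion H. Qed.

Lemma weak_normal_Choice P Q : weak_normal (Choice P Q).
Proof. intros [M' H]; inversion H. Qed.

Definition shape (M : term) : nat :=
  match M with Var _ => 0 | Lam _ => 1 | App _ _ => 2 | Choice _ _ => 3 end.

Lemma weak_normal_App P Q : weak_normal (App P Q) <->
  weak_normal P /\ weak_normal Q /\ ~ (shape P = 1%nat /\ is_value Q).
Proof.
  split.
  - intros H; repeat split.
    + intros [P' HP]; apply H; eexists; apply bw_appl; eauto.
    + intros [Q' HQ]; apply H; eexists; apply bw_appr; eauto.
    + intros [HP HQ]; destruct P; simpl in HP; try discriminate.
      apply H; eexists; apply bw_redex; auto.
  - intros [HP [HQ HK]] [M' H]; inversion H; subst.
    + apply HK; simpl; auto.
    + apply HP; eauto.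
    + apply HQ; eauto.
Qed.

Lemma stepU_weak_normal M M' : weak_normal M -> stepU M M' ->
  weak_normal M' /\ shape M' = shape M.
Proof.
  intros Hw H; induction H as [M M' H|P P' Hw' H IH|P P' Q Hw' H IH|P Q Q' Hw' H IH|P P' Q|P Q Q'].
  - exfalso; apply Hw; eauto.
  - split; [apply weak_normal_Lam|reflexivity].
  - apply weak_normal_App in Hw as [HP [HQ HK]].
    destruct (IH HP) as [HP' Hs]; split; [|reflexivity].
    apply weak_normal_App; repeat split; auto; rewrite Hs; auto.
  - apply weak_normal_App in Hw as [HP [HQ HK]].
    destruct (IH HQ) as [HQ' Hs]; split; [|reflexivity].
    apply weak_normal_App; repeat split; auto.
    intros [A B]; apply HK; split; auto.
    destruct Q, Q'; simpl in *; try discriminate; auto.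
  - split; [apply weak_normal_Choice|reflexivity].
  - split; [apply weak_normal_Choice|reflexivity].
Qed.

Lemma stepU_weak_normal_preserved M M' : weak_normal M -> stepU M M' -> weak_normal M'.
Proof. intros Hw H; exact (proj1 (stepU_weak_normal _ _ Hw H)). Qed.

Lemma stepU_diamond M M1 M2 : stepU M M1 -> stepU M M2 ->
  M1 = M2 \/ exists M3, stepU M1 M3 /\ stepU M2 M3.
Proof.
  intros H1; revert M2; induction H1; intros M2 H2; inversion H2; subst;
    try (exfalso; match goal with
                  H : weak_normal ?X, H' : beta_weak ?X _ |- _ => apply H; eauto end).
  - destruct (beta_weak_diamond _ _ _ H H0) as [->|[M3 [A B]]]; [left; auto|].
    right; exists M3; split; apply su_weak; auto.
  - destruct (IHstepU _ H4) as [->|[M3 [A B]]]; [left; auto|].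
    right; exists (Lam M3); split; apply su_lam; auto using weak_normal_Lam.
  - destruct (IHstepU _ H6) as [->|[M3 [A B]]]; [left; auto|].
    right; exists (App M3 Q); split; apply su_appl;
      eauto using stepU_weak_normal_preserved, su_appl.
  - right; exists (App P' Q'); split.
    + apply su_appr; eauto using stepU_weak_normal_preserved, su_appl, su_appr.
    + apply su_appl; eauto using stepU_weak_normal_preserved, su_appl, su_appr.
  - right; exists (App P' Q'); split.
    + apply su_appl; eauto using stepU_weak_normal_preserved, su_appl, su_appr.
    + apply su_appr; eauto using stepU_weak_normal_preserved, su_appl, su_appr.
  - destruct (IHstepU _ H6) as [->|[M3 [A B]]]; [left; auto|].
    right; exists (App P M3); split; apply su_appr;
      eauto using stepU_weak_normal_preserved, su_appr.
  - destruct (IHstepU _ H6) as [->|[M3 [A B]]]; [left; auto|].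
    right; exists (Choice M3 Q); split; apply su_chl; auto using weak_normal_Choice.
  - right; exists (Choice P' Q'); split.
    + apply su_chr; auto using weak_normal_Choice.
    + apply su_chl; auto using weak_normal_Choice.
  - right; exists (Choice P' Q'); split.
    + apply su_chl; auto using weak_normal_Choice.
    + apply su_chr; auto using weak_normal_Choice.
  - destruct (IHstepU _ H6) as [->|[M3 [A B]]]; [left; auto|].
    right; exists (Choice P M3); split; apply su_chr; auto using weak_normal_Choice.
Qed.

Definition oplus_normal (M : term) : Prop := ~ exists P Q, oplus_step M P Q.

Lemma surface_normal_iff M : surface_normal M <-> weak_normal M /\ oplus_normal M.
Proof.
  split.
  - intros H; split.
    + intros [M' HM]; apply H; eexists; apply ss_beta; eauto.
    + intros [P [Q HM]]; apply H; eexists; apply ss_oplus; eauto.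
  - intros [Hw Ho] [m Hm]; inversion Hm; subst.
    + apply Hw; eauto.
    + apply Ho; eauto.
Qed.

Lemma stepU_surface_normal M M' : surface_normal M -> stepU M M' -> surface_normal M'.
Proof.
  intros Hs H; apply surface_normal_iff in Hs as [Hw Ho].
  apply surface_normal_iff; split; [exact (stepU_weak_normal_preserved _ _ Hw H)|].
  revert Hw Ho; induction H as [M M' H|P P' Hw' H IH|P P' Q Hw' H IH|P Q Q' Hw' H IH|P P' Q|P Q Q'];
    intros Hw Ho.
  - exfalso; apply Hw; eauto.
  - intros [A [B HO]]; inversion HO.
  - apply weak_normal_App in Hw as [HP _].
    intros [A [B HO]]; inversion HO; subst.
    + apply (IH HP); [intros [C [D HC]]; apply Ho; do 2 eexists; apply os_appl|]; eauto.
    + apply Ho; do 2 eexists; apply os_appr; eauto.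
  - apply weak_normal_App in Hw as [_ [HQ _]].
    intros [A [B HO]]; inversion HO; subst.
    + apply Ho; do 2 eexists; apply os_appl; eauto.
    + apply (IH HQ); [intros [C [D HC]]; apply Ho; do 2 eexists; apply os_appr|]; eauto.
  - exfalso; apply Ho; do 2 eexists; apply os_redex.
  - exfalso; apply Ho; do 2 eexists; apply os_redex.
Qed.

Lemma beta_weak_full M M' : beta_weak M M' -> beta_full M M'.
Proof. induction 1; constructor; auto. Qed.

Lemma stepU_beta_full M M' : stepU M M' -> beta_full M M'.
Proof. induction 1; try constructor; auto using beta_weak_full. Qed.

Lemma beta_full_stepU M M' : beta_full M M' -> exists M'', stepU M M''.
Proof.
  induction 1 as [M V HV|M M' N _ [X HX]|M N N' _ [X HX]|M M' _ [X HX]|M M' N _ [X HX]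
                 |M N N' _ [X HX]].
  - eexists; apply su_weak, bw_redex; auto.
  - destruct (classic (weak_normal (App M N))) as [Hw|Hw].
    + eexists; apply su_appl; eauto.
    + apply NNPP in Hw as [Y HY]; eexists; apply su_weak; eauto.
  - destruct (classic (weak_normal (App M N))) as [Hw|Hw].
    + eexists; apply su_appr; eauto.
    + apply NNPP in Hw as [Y HY]; eexists; apply su_weak; eauto.
  - eexists; apply su_lam; eauto using weak_normal_Lam.
  - eexists; apply su_chl; eauto using weak_normal_Choice.
  - eexists; apply su_chr; eauto using weak_normal_Choice.
Qed.

Lemma sstep_step M m : sstep M m -> step M m.
Proof. destruct 1; [apply st_beta, beta_weak_full | apply st_oplus]; auto. Qed.

Lemma sstep_stepE M m : sstep M m -> stepE M m.
Proof. intro H; apply se_surf; auto; intro Hs; apply Hs; eauto. Qed.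

Lemma stepE_not_normal M m : stepE M m -> ~ normal M.
Proof.
  destruct 1 as [M m _ H|M M' _ H]; intro Hn; apply Hn.
  - exists m; apply sstep_step; auto.
  - eexists; apply st_beta, stepU_beta_full; eauto.
Qed.

Lemma stepE_progress M : ~ normal M -> exists m, stepE M m.
Proof.
  intro H; apply NNPP in H as [m Hm].
  destruct (classic (surface_normal M)) as [Hs|Hs].
  - destruct Hm as [M M' Hb|M P Q Ho].
    + destruct (beta_full_stepU _ _ Hb) as [X HX]; eexists; apply se_U; eauto.
    + exfalso; apply Hs; eexists; apply ss_oplus; eauto.
  - pose proof Hs as Hs'; apply NNPP in Hs' as [m' Hm']; exists m'; apply se_surf; auto.
Qed.

Lemma scale_app p a b : scale p (a ++ b) = scale p a ++ scale p b.
Proof. apply map_app. Qed.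

Lemma scale_scale p q m : scale p (scale q m) = scale (p * q) m.
Proof. induction m as [|[r M] m IH]; simpl; auto; rewrite IH; f_equal; f_equal; ring. Qed.

Lemma scale_1 m : scale 1 m = m.
Proof. induction m as [|[r M] m IH]; simpl; auto; rewrite IH; f_equal; f_equal; ring. Qed.

Lemma oplus_md_scale P Q : oplus_md P Q = scale (1/2) (unit_md P) ++ scale (1/2) (unit_md Q).
Proof. unfold oplus_md, scale, unit_md; simpl; rewrite Rmult_1_r; reflexivity. Qed.

Inductive lift (r : term -> mdist -> Prop) : mdist -> mdist -> Prop :=
| lift_nil : lift r [] []
| lift_cons p M m l n : r M m -> lift r l n -> lift r ((p, M) :: l) (scale p m ++ n).

Section Lift.
Variable r : term -> mdist -> Prop.

Lemma lift_inv p M l x : lift r ((p, M) :: l) x ->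
  exists m n, r M m /\ lift r l n /\ x = scale p m ++ n.
Proof. intro H; inversion H; subst; eauto. Qed.

Lemma lift_unit M m : lift r (unit_md M) m <-> r M m.
Proof.
  split.
  - intro H; apply lift_inv in H as [m' [n [Hr [Hn ->]]]]; inversion Hn; subst.
    rewrite app_nil_r, scale_1; auto.
  - intro H; rewrite <- (scale_1 m), <- app_nil_r; constructor; auto; constructor.
Qed.

Lemma lift_oplus_md P Q a b : r P a -> r Q b ->
  lift r (oplus_md P Q) (scale (1/2) a ++ scale (1/2) b).
Proof. intros Ha Hb; rewrite <- (app_nil_r (scale _ b)); repeat constructor; auto. Qed.

Lemma lift_app a a' b b' : lift r a a' -> lift r b b' -> lift r (a ++ b) (a' ++ b').
Proof. induction 1; intro Hb; simpl; auto; rewrite <- app_assoc; constructor; auto. Qed.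

Lemma lift_scale p a b : lift r a b -> lift r (scale p a) (scale p b).
Proof.
  induction 1; simpl; [constructor|].
  rewrite scale_app, scale_scale; constructor; auto.
Qed.

Lemma lift_perm l l' n : Permutation l l' -> lift r l n ->
  exists n', lift r l' n' /\ Permutation n n'.
Proof.
  intros HP; revert n; induction HP as [|[p M] l l' _ IH|[p M] [q K] l|l l' l'' _ IH1 _ IH2];
    intros n H.
  - exists n; split; auto.
  - apply lift_inv in H as [m [n0 [Hm [Hn ->]]]].
    destruct (IH _ Hn) as [n' [H1 H2]]; exists (scale p m ++ n'); split.
    + constructor; auto.
    + apply Permutation_app_head; auto.
  - apply lift_inv in H as [m [n0 [Hm [Hn ->]]]].
    apply lift_inv in Hn as [m' [n1 [Hm' [Hn ->]]]].
    exists (scale p m' ++ (scale q m ++ n1)); split.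
    + repeat constructor; auto.
    + rewrite !app_assoc; apply Permutation_app_tail, Permutation_app_comm.
  - destruct (IH1 _ H) as [n1 [H1 H2]]; destruct (IH2 _ H1) as [n2 [H3 H4]].
    exists n2; split; auto; eapply Permutation_trans; eauto.
Qed.

Lemma lift_total : (forall M, exists m, r M m) -> forall l, exists n, lift r l n.
Proof.
  intros Hr l; induction l as [|[p M] l [n IH]]; [exists []; constructor|].
  destruct (Hr M) as [m Hm]; exists (scale p m ++ n); constructor; auto.
Qed.

Definition joinable (m1 m2 : mdist) : Prop :=
  exists n1 n2, lift r m1 n1 /\ lift r m2 n2 /\ Permutation n1 n2.

Lemma joinable_sym m1 m2 : joinable m1 m2 -> joinable m2 m1.
Proof. intros [n1 [n2 [H1 [H2 P]]]]; exists n2, n1; auto using Permutation_sym. Qed.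

End Lift.

Lemma lift_mono (r r' : term -> mdist -> Prop) : (forall M m, r M m -> r' M m) ->
  forall l n, lift r l n -> lift r' l n.
Proof. intros Hr l n; induction 1; constructor; auto. Qed.

Lemma joinable_mono (r r' : term -> mdist -> Prop) : (forall M m, r M m -> r' M m) ->
  forall m1 m2, joinable r m1 m2 -> joinable r' m1 m2.
Proof. intros Hr m1 m2 [n1 [n2 [H1 [H2 P]]]]; exists n1, n2; eauto using lift_mono. Qed.

Lemma sstep_beta_oplus_joinable M M1 P Q : beta_weak M M1 -> oplus_step M P Q ->
  joinable sstep (unit_md M1) (oplus_md P Q).
Proof.
  intros Hb Ho; destruct (beta_weak_oplus_step _ _ _ _ Hb Ho) as [P' [Q' [HP [HQ HO]]]].
  exists (oplus_md P' Q'), (oplus_md P' Q'); repeat split; [| |apply Permutation_refl].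
  - apply lift_unit; constructor; auto.
  - rewrite (oplus_md_scale P' Q'); apply lift_oplus_md; constructor; auto.
Qed.

Lemma sstep_diamond M m1 m2 : sstep M m1 -> sstep M m2 -> m1 = m2 \/ joinable sstep m1 m2.
Proof.
  intros H1 H2; destruct H1 as [M M1 B1|M P1 Q1 O1];
    inversion H2 as [M' M2 B2|M' P2 Q2 O2]; subst.
  - destruct (beta_weak_diamond _ _ _ B1 B2) as [->|[M3 [C1 C2]]]; [left; auto|right].
    exists (unit_md M3), (unit_md M3); repeat split; try apply lift_unit; try constructor; auto.
  - right; eapply sstep_beta_oplus_joinable; eauto.
  - right; apply joinable_sym; eapply sstep_beta_oplus_joinable; eauto.
  - destruct (oplus_step_diamond _ _ _ _ _ O1 O2)
      as [[-> ->]|[A [B [C [D [HA [HB [HC HD]]]]]]]]; [left; auto|right].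
    exists (scale (1/2) (oplus_md A B) ++ scale (1/2) (oplus_md C D)),
           (scale (1/2) (oplus_md A C) ++ scale (1/2) (oplus_md B D)).
    repeat split; try (apply lift_oplus_md; constructor; auto).
    unfold scale, oplus_md; simpl; apply perm_skip, perm_swap.
Qed.

Lemma stepE_diamond M m1 m2 : stepE M m1 -> stepE M m2 -> m1 = m2 \/ joinable stepE m1 m2.
Proof.
  intros H1 H2; destruct H1 as [M m1' Hs1 S1|M M1 Hs1 U1];
    inversion H2 as [M' m2' Hs2 S2|M' M2 Hs2 U2]; subst; try contradiction.
  - destruct (sstep_diamond _ _ _ S1 S2) as [->|J]; [left; auto|right].
    exact (joinable_mono _ _ sstep_stepE _ _ J).
  - destruct (stepU_diamond _ _ _ U1 U2) as [->|[M3 [C1 C2]]]; [left; auto|right].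
    exists (unit_md M3), (unit_md M3); repeat split; try apply Permutation_refl;
      apply lift_unit, se_U; eauto using stepU_surface_normal.
Qed.

Definition fullE1 (M : term) (m : mdist) : Prop := (normal M /\ m = unit_md M) \/ stepE M m.

Lemma fullE1_total M : exists m, fullE1 M m.
Proof.
  destruct (classic (normal M)) as [Hn|Hn].
  - exists (unit_md M); left; auto.
  - destruct (stepE_progress M Hn) as [m Hm]; exists m; right; auto.
Qed.

Lemma fullE1_fullE M m : fullE1 M m -> fullE (unit_md M) m.
Proof. intros [[Hn ->]|HE]; [apply fe_normal|apply fe_step]; auto. Qed.

Lemma fullE_lift_fullE1 l n : fullE l n -> lift fullE1 l n.
Proof.
  induction 1 as [M Hn|M m H|l ms Hlen _ IH].
  - apply lift_unit; left; auto.
  - apply lift_unit; right; auto.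
  - assert (Hi : forall i, (i < length l)%nat -> fullE1 (snd (nth i l (0, Var 0))) (nth i ms []))
      by (intros i Hi; apply (lift_unit fullE1); exact (IH i Hi)).
    clear IH; revert ms Hlen Hi; induction l as [|[p M] l IHl]; intros ms Hlen Hi.
    + destruct ms; simpl in *; try discriminate; constructor.
    + destruct ms as [|m ms]; simpl in *; try discriminate; constructor.
      * apply (Hi 0%nat); lia.
      * apply IHl; [lia|]; intros i Hlt; apply (Hi (S i)); lia.
Qed.

Lemma lift_fullE1_fullE l n : lift fullE1 l n -> fullE l n.
Proof.
  intro H.
  assert (exists ms, length ms = length l /\
     (forall i, (i < length l)%nat -> fullE1 (snd (nth i l (0, Var 0))) (nth i ms [])) /\
     n = concat (map (fun pm => scale (fst (fst pm)) (snd pm)) (combine l ms)))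
    as [ms [Hlen [Hi ->]]].
  { induction H as [|p M m l n Hm _ [ms [Hlen [Hi ->]]]].
    - exists []; repeat split; auto; simpl; intros; lia.
    - exists (m :: ms); repeat split; simpl; auto.
      intros [|i] Hlt; simpl; auto; apply Hi; simpl in Hlt; lia. }
  apply fe_lift; auto; intros i Hlt; apply fullE1_fullE, Hi, Hlt.
Qed.

Lemma obs_app a b N : obs (a ++ b) N = obs a N + obs b N.
Proof.
  unfold obs; destruct excluded_middle_informative; [|ring].
  induction a as [|x a IH]; simpl; [ring|rewrite IH; ring].
Qed.

Lemma obs_scale p a N : obs (scale p a) N = p * obs a N.
Proof.
  unfold obs; destruct excluded_middle_informative; [|ring].
  induction a as [|[q M] a IH]; simpl; [ring|rewrite IH].
  destruct term_eq_dec; ring.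
Qed.

Lemma obs_perm a b : Permutation a b -> obs a = obs b.
Proof.
  intro H; apply functional_extensionality; intro N.
  unfold obs; destruct excluded_middle_informative; [|reflexivity].
  induction H; simpl; try ring; congruence.
Qed.

Lemma obs_lift_stepE m n N : lift stepE m n -> obs m N = 0.
Proof.
  induction 1 as [|p M m l n HM _ IH].
  { unfold obs; destruct excluded_middle_informative; reflexivity. }
  change ((p, M) :: l) with ([(p, M)] ++ l); rewrite obs_app, IH.
  unfold obs; destruct excluded_middle_informative as [HN|]; simpl; [|ring].
  destruct term_eq_dec as [->|]; [|ring].
  exfalso; exact (stepE_not_normal _ _ HM HN).
Qed.

Lemma fullE1_diamond M a1 a2 : fullE1 M a1 -> fullE1 M a2 ->
  obs a1 = obs a2 /\ joinable fullE1 a1 a2.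
Proof.
  assert (Hrefl : forall a, obs a = obs a /\ joinable fullE1 a a).
  { intro a; split; auto.
    destruct (lift_total _ fullE1_total a) as [b Hb]; exists b, b; auto. }
  intros [[Hn ->]|E1] [[Hn' ->]|E2]; auto.
  - exfalso; exact (stepE_not_normal _ _ E2 Hn).
  - exfalso; exact (stepE_not_normal _ _ E1 Hn').
  - destruct (stepE_diamond _ _ _ E1 E2) as [->|J]; auto.
    destruct J as [n1 [n2 [H1 [H2 P]]]]; split.
    + apply functional_extensionality; intro N.
      rewrite (obs_lift_stepE _ _ N H1), (obs_lift_stepE _ _ N H2); reflexivity.
    + apply (joinable_mono stepE); [intros; right; auto|]; exists n1, n2; auto.
Qed.

Lemma lift_fullE1_diamond l m1 m2 : lift fullE1 l m1 -> lift fullE1 l m2 ->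
  obs m1 = obs m2 /\ joinable fullE1 m1 m2.
Proof.
  intros H1; revert m2; induction H1 as [|p M a1 l n1 Ha1 _ IH]; intros m2 H2.
  - inversion H2; subst; split; auto; exists [], []; repeat constructor.
  - apply lift_inv in H2 as [a2 [n2 [Ha2 [Hn2 ->]]]].
    destruct (fullE1_diamond _ _ _ Ha1 Ha2) as [Oa [b1 [b2 [Hb1 [Hb2 Pb]]]]].
    destruct (IH _ Hn2) as [On [c1 [c2 [Hc1 [Hc2 Pc]]]]].
    split.
    + apply functional_extensionality; intro N.
      rewrite !obs_app, !obs_scale, Oa, On; reflexivity.
    + exists (scale p b1 ++ c1), (scale p b2 ++ c2); repeat split.
      * apply lift_app; auto; apply lift_scale; auto.
      * apply lift_app; auto; apply lift_scale; auto.
      * apply Permutation_app; auto; apply Permutation_map; auto.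
Qed.

Definition abs_weight (m : mdist) : R := fold_right (fun pM acc => Rabs (fst pM) + acc) 0 m.

Lemma abs_weight_app a b : abs_weight (a ++ b) = abs_weight a + abs_weight b.
Proof. induction a; simpl; [ring|rewrite IHa; ring]. Qed.

Lemma abs_weight_scale p a : abs_weight (scale p a) = Rabs p * abs_weight a.
Proof. induction a as [|[q M] a IH]; simpl; [ring|rewrite IH, Rabs_mult; ring]. Qed.

Lemma fullE1_abs_weight M m : fullE1 M m -> abs_weight m = 1.
Proof.
  assert (H1 : abs_weight (unit_md M) = 1) by (simpl; rewrite Rabs_R1; ring).
  intros [[_ ->]|[M' m' _ [M'' M1 _|M'' P Q _]|M' M1 _ _]]; simpl;
    rewrite ?Rabs_R1, ?Rabs_pos_eq; lra.
Qed.

Lemma lift_fullE1_abs_weight l n : lift fullE1 l n -> abs_weight n = abs_weight l.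
Proof.
  induction 1 as [|p M m l n Hm _ IH]; simpl; auto.
  rewrite abs_weight_app, abs_weight_scale, IH, (fullE1_abs_weight _ _ Hm); ring.
Qed.

Lemma obs_le_abs_weight m N : obs m N <= abs_weight m.
Proof.
  assert (Hpos : forall m, 0 <= abs_weight m).
  { induction m0 as [|[q M] m0 IH]; simpl; [lra|pose proof (Rabs_pos q); lra]. }
  unfold obs; destruct excluded_middle_informative; [|apply Hpos].
  induction m as [|[q M] m IH]; simpl; [lra|].
  destruct term_eq_dec; pose proof (Rle_abs q); pose proof (Rabs_pos q); lra.
Qed.

Section RandomDescent.
Variables (A B : Type) (red eqv : A -> A -> Prop) (f : A -> B).
Hypothesis red_total : forall a, exists b, red a b.
Hypothesis eqv_refl : forall a, eqv a a.
Hypothesis eqv_sym : forall a b, eqv a b -> eqv b a.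
Hypothesis f_eqv : forall a b, eqv a b -> f a = f b.
Hypothesis red_eqv : forall a b a', eqv a b -> red a a' -> exists b', red b b' /\ eqv a' b'.
Hypothesis red_diamond : forall a b1 b2, red a b1 -> red a b2 ->
  f b1 = f b2 /\ exists c1 c2, red b1 c1 /\ red b2 c2 /\ eqv c1 c2.

Definition red_path (s : nat -> A) : Prop := forall k, red (s k) (s (S k)).

Definition red_next (a : A) : A :=
  proj1_sig (ClassicalEpsilon.constructive_indefinite_description _ (red_total a)).

Fixpoint descent (a : A) (k : nat) : A :=
  match k with O => a | S k => red_next (descent a k) end.

Lemma descent_red_path a : red_path (descent a).
Proof. intro k; exact (proj2_sig (ClassicalEpsilon.constructive_indefinite_description _ _)). Qed.

Lemma red_path_tail s : red_path s -> red_path (fun k => s (S k)).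
Proof. intros Hs k; apply Hs. Qed.

Lemma red_path_cons a s : red a (s O) -> red_path s ->
  red_path (fun k => match k with O => a | S k => s k end).
Proof. intros Ha Hs [|k]; [exact Ha|apply Hs]. Qed.

(* The first steps of [s] and [t] are closed by the diamond; extending the two
   joining steps to arbitrary paths, the induction hypothesis compares these
   with the tails of [s] and [t]. *)
Theorem random_descent n : forall s t, red_path s -> red_path t -> eqv (s O) (t O) ->
  f (s n) = f (t n).
Proof.
  induction n as [|j IH] using Nat.strong_induction_le; intros s t Hs Ht E; [auto|].
  destruct (red_eqv _ _ _ (eqv_sym _ _ E) (Ht O)) as [t1' [Ht1' Et]].
  destruct (red_diamond _ _ _ (Hs O) Ht1') as [F1 [c1 [c2 [Hc1 [Hc2 Ec]]]]].
  set (u := fun k => match k with O => s 1%nat | S k => descent c1 k end).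
  set (v := fun k => match k with O => t1' | S k => descent c2 k end).
  assert (Hu : red_path u) by (apply red_path_cons; auto using descent_red_path).
  assert (Hv : red_path v) by (apply red_path_cons; auto using descent_red_path).
  transitivity (f (u j)).
  { apply (IH j (le_n _) (fun k => s (S k)) u); auto using red_path_tail. }
  transitivity (f (v j)).
  2:{ symmetry; apply (IH j (le_n _) (fun k => t (S k)) v); auto using red_path_tail. }
  destruct j as [|j]; [exact F1|].
  apply (IH j (Nat.le_succ_diag_r j) (descent c1) (descent c2)); auto using descent_red_path.
Qed.

End RandomDescent.

Lemma is_sup_fun_unique f mu nu : is_sup_fun f mu -> is_sup_fun f nu -> mu = nu.
Proof.
  intros [Ubm Lm] [Ubn Ln]; apply functional_extensionality; intro N.
  apply Rle_antisym; [apply Lm|apply Ln]; auto.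
Qed.

Lemma is_sup_fun_exists f c : (forall n N, f n N <= c) -> exists mu, is_sup_fun f mu.
Proof.
  intro Hc.
  assert (Hlub : forall N, {x | is_lub (fun x => exists n, x = f n N) x}).
  { intro N; apply completeness.
    - exists c; intros x [n ->]; apply Hc.
    - exists (f O N), O; reflexivity. }
  exists (fun N => proj1_sig (Hlub N)); split.
  - intros n N; apply (proj1 (proj2_sig (Hlub N))); exists n; reflexivity.
  - intros nu Hnu N; apply (proj2 (proj2_sig (Hlub N))); intros y [n ->]; apply Hnu.
Qed.

Lemma maximal_seq_fullE m s : maximal_seq fullE m s ->
  s O = m /\ red_path _ (lift fullE1) s.
Proof.
  intros [Hs0 Hs]; split; auto; intro k.
  destruct (Hs k) as [H|[Hn _]]; [apply fullE_lift_fullE1; auto|].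
  exfalso; apply Hn; destruct (lift_total _ fullE1_total (s k)) as [n H].
  exists n; apply lift_fullE1_fullE; auto.
Qed.

Lemma fullE_obs_deterministic m s t : maximal_seq fullE m s -> maximal_seq fullE m t ->
  forall n, obs (s n) = obs (t n).
Proof.
  intros Hs Ht n.
  apply maximal_seq_fullE in Hs as [Hs0 Hs]; apply maximal_seq_fullE in Ht as [Ht0 Ht].
  apply (random_descent _ _ (lift fullE1) (@Permutation _) obs).
  - exact (lift_total _ fullE1_total).
  - exact (@Permutation_refl _).
  - exact (@Permutation_sym _).
  - exact obs_perm.
  - intros a b a' P H; exact (lift_perm _ _ _ _ P H).
  - exact lift_fullE1_diamond.
  - exact Hs.
  - exact Ht.
  - rewrite Hs0, Ht0; apply Permutation_refl.
Qed.

Lemma Lim_obs_fullE_unique m mu nu : Lim_obs m fullE mu -> Lim_obs m fullE nu -> mu = nu.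
Proof.
  intros [s [Hs Hmu]] [t [Ht Hnu]].
  assert (E : (fun n => obs (s n)) = (fun n => obs (t n))).
  { apply functional_extensionality; exact (fullE_obs_deterministic m s t Hs Ht). }
  rewrite E in Hmu; exact (is_sup_fun_unique _ _ _ Hmu Hnu).
Qed.

Lemma Lim_obs_fullE_exists m : exists mu, Lim_obs m fullE mu.
Proof.
  set (s := descent _ (lift fullE1) (lift_total _ fullE1_total) m).
  assert (Hs : red_path _ (lift fullE1) s) by apply descent_red_path.
  assert (Hmax : maximal_seq fullE m s).
  { split; [reflexivity|intro n; left; apply lift_fullE1_fullE, Hs]. }
  assert (Hw : forall n, abs_weight (s n) = abs_weight m).
  { induction n as [|n IH]; [reflexivity|rewrite <- IH; apply lift_fullE1_abs_weight, Hs]. }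
  destruct (is_sup_fun_exists (fun n => obs (s n)) (abs_weight m)) as [mu Hmu].
  { intros n N; rewrite <- (Hw n); apply obs_le_abs_weight. }
  exists mu, s; auto.
Qed.

Theorem mainTheorem10 :
  forall m : mdist, valid_mdist m -> exists! mu : term -> R, Lim_obs m fullE mu.
Proof.
  intros m _.
  destruct (Lim_obs_fullE_exists m) as [mu Hmu].
  exists mu; split; [exact Hmu|].
  intros nu Hnu; exact (Lim_obs_fullE_unique m mu nu Hmu Hnu).
Qed.
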